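(* Let $x>0$, $y>0$, and let $p=p_n=\lfloor x n^{1/2}\rfloor$ and $q=q_n=\lfloor y n^{1/2}\rfloor$. Set $$K_n=\left(\frac{2}{n}\right)^{pq/2}\prod_{j=1}^{q}\frac{\Gamma((n-j+1)/2)}{\Gamma((n-p-j+1)/2)}.$$ Then, as $n\to\infty$, $$K_n=\exp\left\{-\left(\frac{p^2q+pq^2}{4n}+\frac{xy}{4}+\frac{2x^3y+2xy^3+3x^2y^2}{24}\right)+o(1)\right\}.$$
   Context: $\Gamma$ denotes the Gamma function and $\lfloor a\rfloor$ the integer part of $a$. *)

From Stdlib Require Import Reals.
From Coquelicot Require Import Coquelicot.
Open Scope R_scope.

(* Euler Gamma function, Gamma(s) = int_0^oo t^(s-1) e^(-t) dt (meaningful for s > 0). *)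
Definition Gamma (s : R) : R :=
  RInt_gen (fun t => Rpower t (s - 1) * exp (- t))
           (at_right 0) (Rbar_locally p_infty).

Fixpoint prodR (f : nat -> R) (q : nat) : R :=
  match q with
  | O => 1
  | S k => prodR f k * f (S k)
  end.

Definition nfloor (r : R) : nat := Z.to_nat (Int_part r).

Definition p_n (x : R) (n : nat) : nat := nfloor (x * sqrt (INR n)).

Definition K_n (x y : R) (n : nat) : R :=
  let p := p_n x n in
  let q := p_n y n in
  Rpower (2 / INR n) (INR (p * q) / 2) *
  prodR (fun j => Gamma ((INR n - INR j + 1) / 2) /
                  Gamma ((INR n - INR p - INR j + 1) / 2)) q.

(* Write p = 2 m + e with e in {0, 1}. Since Gamma a = Gamma (a - m) * prod_(i <= m) (a - i),
   the j-th factor of K_n, multiplied by (2/n)^(p/2), is prod_(i <= m) (1 - (j - 1 + 2 i)/n),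
   times, when p is odd, one half step (2/n)^(1/2) Gamma b / Gamma (b - 1/2), which the
   log-convexity of Gamma squeezes between (1 - (j + p)/n)^(1/2) and (1 - (j + p - 1)/n)^(1/2).
   All the arguments t of ln (1 - t) are O(n^(-1/2)) and there are O(n) of them, so
   ln (1 - t) = - t - t^2/2 + O(t^3) leaves an error O(n^(-1/2)). The first- and second-order
   terms sum in closed form; once the divergent part (p^2 q + p q^2)/(4n) is split off, the rest
   is a homogeneous function of (q, m, 1)/sqrt n, converging to
   xy/4 + (2x^3y + 3x^2y^2 + 2xy^3)/24. *)

From Pilot Require Import Defs.
From Stdlib Require Import Reals ZArith Lra Lia.
From Coquelicot Require Import Coquelicot.
Open Scope R_scope.

Lemma exp_le x y : x <= y -> exp x <= exp y.
Proof. intros [H | ->]; [apply Rlt_le, exp_increasing, H | apply Rle_refl]. Qed.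

Lemma Rpower_sub_1 t y : 0 < t -> Rpower t (y - 1) = Rpower t y / t.
Proof.
  intros Ht; unfold Rminus; rewrite Rpower_plus, Rpower_Ropp, Rpower_1 by exact Ht.
  reflexivity.
Qed.

Lemma Rpower_le_of_le_root s eps t : 0 < s -> 0 < eps -> 0 < t <= Rpower eps (/ s) ->
  Rpower t s <= eps.
Proof.
  intros Hs Heps Ht.
  apply Rle_trans with (Rpower (Rpower eps (/ s)) s); [apply Rle_Rpower_l; lra |].
  rewrite Rpower_mult, Rinv_l, Rpower_1 by lra; apply Rle_refl.
Qed.

Lemma exp_half_le C eps t : 0 < C -> 0 < eps -> 2 * ln (C / eps) <= t ->
  C * exp (- t / 2) <= eps.
Proof.
  intros HC Heps Ht.
  apply Rle_trans with (C * exp (- ln (C / eps))).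
  - apply Rmult_le_compat_l; [lra | apply exp_le; lra].
  - rewrite exp_Ropp, exp_ln by (apply Rdiv_lt_0_compat; lra).
    right; field; lra.
Qed.

Lemma le_div2_of_ratio a n : 0 < n -> a / n <= 1 / 2 -> a <= n / 2.
Proof.
  intros Hn H; apply Rmult_le_compat_r with (r := n) in H; [| lra].
  replace (a / n * n) with a in H by (field; lra); lra.
Qed.

Lemma INR_div_mod_2 p : INR p = 2 * INR (p / 2) + INR (p mod 2).
Proof.
  replace 2 with (INR 2) by reflexivity.
  rewrite <- mult_INR, <- plus_INR; f_equal; apply Nat.div_mod_eq.
Qed.

Lemma le_of_is_derive_nonneg (f df : R -> R) a b : a <= b ->
  (forall z, a <= z <= b -> is_derive f z (df z)) ->
  (forall z, a <= z <= b -> 0 <= df z) -> f a <= f b.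
Proof.
  intros Hab Hf Hdf.
  destruct (MVT_gen f a b df) as [c [Hc Hmvt]];
    rewrite ?Rmin_left, ?Rmax_right in * by exact Hab.
  - intros z Hz; apply Hf; lra.
  - intros z Hz; apply continuity_pt_filterlim,
      (@ex_derive_continuous R_AbsRing R_NormedModule); eexists; apply Hf, Hz.
  - assert (0 <= df c * (b - a)) by (apply Rmult_le_pos; [apply Hdf, Hc | lra]); lra.
Qed.

Lemma ln_one_sub_bounds t : 0 <= t <= 1 / 2 ->
  - t - t ^ 2 / 2 - t ^ 3 <= ln (1 - t) <= - t - t ^ 2 / 2.
Proof.
  intros Ht.
  assert (Hlo : ln (1 - 0) + 0 + 0 ^ 2 / 2 + 0 ^ 3 <= ln (1 - t) + t + t ^ 2 / 2 + t ^ 3).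
  { apply (le_of_is_derive_nonneg (fun z => ln (1 - z) + z + z ^ 2 / 2 + z ^ 3)
      (fun z => z ^ 2 * (2 - 3 * z) / (1 - z))); [lra | |].
    - intros z Hz; auto_derive; [lra | field; lra].
    - intros z Hz; apply Rmult_le_pos; [apply Rmult_le_pos; nra |].
      apply Rlt_le, Rinv_0_lt_compat; lra. }
  assert (Hhi : - (ln (1 - 0) + 0 + 0 ^ 2 / 2) <= - (ln (1 - t) + t + t ^ 2 / 2)).
  { apply (le_of_is_derive_nonneg (fun z => - (ln (1 - z) + z + z ^ 2 / 2))
      (fun z => z ^ 2 / (1 - z))); [lra | |].
    - intros z Hz; auto_derive; [lra | field; lra].
    - intros z Hz; apply Rmult_le_pos; [nra | apply Rlt_le, Rinv_0_lt_compat; lra]. }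
  rewrite Rminus_0_r, ln_1 in Hlo, Hhi; lra.
Qed.

(** * Improper integrals over (0, +oo) *)

Lemma eventually_0_p_infty a0 b0 : 0 < a0 ->
  filter_prod (at_right 0) (Rbar_locally p_infty)
    (fun ab => 0 < fst ab < a0 /\ b0 < snd ab).
Proof.
  intros Ha0; apply (Filter_prod _ _ _ (fun a => 0 < a < a0) (fun b => b0 < b)).
  - exists (mkposreal a0 Ha0); intros t Ht Ht0; split; [exact Ht0 |].
    apply Rabs_lt_between' in Ht; simpl in Ht; lra.
  - exists b0; auto.
  - intros a b Ha Hb; split; assumption.
Qed.

Section ImproperIntegral.

Variable f : R -> R.
Hypothesis f_int : forall a b, 0 < a -> 0 < b -> ex_RInt f a b.

Lemma Rabs_RInt_lt_of_sorted (P : R -> Prop) eps :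
  (forall a b, P a -> P b -> a <= b -> Rabs (RInt f a b) < eps) ->
  forall a b, 0 < a -> 0 < b -> P a -> P b -> Rabs (RInt f a b) < eps.
Proof.
  intros HP a b Ha Hb Pa Pb; destruct (Rle_lt_dec a b); [auto |].
  rewrite <- opp_RInt_swap by (apply f_int; assumption).
  change (Rabs (- RInt f b a) < eps); rewrite Rabs_Ropp; apply HP; auto; lra.
Qed.

Lemma filter_prod_is_RInt_unique :
  filter_prod (at_right 0) (Rbar_locally p_infty) (fun ab =>
    (exists y : R_CompleteSpace, is_RInt f (fst ab) (snd ab) y) /\
    (forall y1 y2 : R_CompleteSpace,
       is_RInt f (fst ab) (snd ab) y1 -> is_RInt f (fst ab) (snd ab) y2 -> y1 = y2)).
Proof.
  eapply filter_imp; [| apply (eventually_0_p_infty 1 0); lra].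
  intros [a b] [Ha Hb]; simpl in *; split.
  - exists (RInt f a b); apply (@RInt_correct R_CompleteNormedModule), f_int; lra.
  - intros y1 y2 H1 H2; rewrite <- (is_RInt_unique _ _ _ _ H1).
    apply is_RInt_unique, H2.
Qed.

Lemma ex_RInt_gen_0_p_infty :
  (forall eps, 0 < eps -> exists d, 0 < d /\
     forall a b, 0 < a <= b -> b <= d -> Rabs (RInt f a b) < eps) ->
  (forall eps, 0 < eps -> exists M,
     forall a b, M <= a <= b -> Rabs (RInt f a b) < eps) ->
  ex_RInt_gen f (at_right 0) (Rbar_locally p_infty).
Proof.
  intros H0 Hinf; apply (proj1 (filterlimi_locally_cauchy _ filter_prod_is_RInt_unique)).
  intros [eps Heps]; simpl.
  destruct (H0 (eps / 2)) as [d [Hd Hd']]; [lra |].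
  destruct (Hinf (eps / 2)) as [M HM]; [lra |].
  exists (fun ab => 0 < fst ab < d /\ Rmax M 1 < snd ab).
  split; [apply eventually_0_p_infty, Hd |].
  intros [a b] [a' b'] [Ha Hb] [Ha' Hb'] u v Hu Hv; simpl in *.
  apply (@is_RInt_unique R_CompleteNormedModule) in Hu, Hv; subst u v.
  pose proof (Rmax_l M 1); pose proof (Rmax_r M 1).
  change (Rabs (RInt f a' b' - RInt f a b) < eps).
  replace (RInt f a' b' - RInt f a b) with (RInt f a' a + RInt f b b').
  2: { rewrite <- (RInt_Chasles f a' a b'), <- (RInt_Chasles f a b b')
         by (apply f_int; lra).
       change plus with Rplus; ring. }
  assert (Rabs (RInt f a' a) < eps / 2).
  { apply (Rabs_RInt_lt_of_sorted (fun t => 0 < t < d)); try lra.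
    intros c c' Hc Hc' Hcc'; apply Hd'; lra. }
  assert (Rabs (RInt f b b') < eps / 2).
  { apply (Rabs_RInt_lt_of_sorted (fun t => Rmax M 1 < t)); try lra.
    intros c c' Hc Hc' Hcc'; apply HM; lra. }
  pose proof (Rabs_triang (RInt f a' a) (RInt f b b')); lra.
Qed.

Lemma is_RInt_gen_0_p_infty_ge l c a0 b0 : 0 < a0 ->
  is_RInt_gen f (at_right 0) (Rbar_locally p_infty) l ->
  (forall a b, 0 < a < a0 -> b0 < b -> c <= RInt f a b) -> c <= l.
Proof.
  intros Ha0 Hl Hc; apply Rnot_lt_le; intros Hlt.
  pose proof (proj1 (filterlimi_locally _ l) Hl (mkposreal (c - l) ltac:(lra))) as H.
  destruct (filter_ex _ (filter_and _ _ (eventually_0_p_infty a0 b0 Ha0) H))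
    as [[a b] [[Ha Hb] [z [Hz Hball]]]]; simpl in *.
  apply (@is_RInt_unique R_CompleteNormedModule) in Hz; subst z.
  specialize (Hc a b Ha Hb).
  change (Rabs (RInt f a b - l) < c - l) in Hball; apply Rabs_lt_between' in Hball; lra.
Qed.

End ImproperIntegral.

(** * The Gamma function *)

Definition gamma_integrand (s t : R) : R := Rpower t (s - 1) * exp (- t).

Lemma gamma_integrand_pos s t : 0 < gamma_integrand s t.
Proof. apply Rmult_lt_0_compat; apply exp_pos. Qed.

Lemma continuous_gamma_integrand s t : 0 < t -> continuous (gamma_integrand s) t.
Proof.
  intros Ht; apply (@ex_derive_continuous R_AbsRing R_NormedModule).
  unfold gamma_integrand, Rpower; auto_derive; lra.
Qed.

Lemma ex_RInt_gamma_integrand s a b : 0 < a -> 0 < b -> ex_RInt (gamma_integrand s) a b.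
Proof.
  intros Ha Hb; apply (@ex_RInt_continuous R_CompleteNormedModule); intros z [Hz _].
  apply continuous_gamma_integrand; revert Hz; apply Rmin_case; lra.
Qed.

Lemma RInt_gamma_integrand_ge_0 s a b : 0 < a <= b -> 0 <= RInt (gamma_integrand s) a b.
Proof.
  intros Hab; apply RInt_ge_0; [lra | apply ex_RInt_gamma_integrand; lra |].
  intros t _; apply Rlt_le, gamma_integrand_pos.
Qed.

Lemma RInt_gamma_integrand_le_Rpower s a b : 0 < s -> 0 < a <= b ->
  RInt (gamma_integrand s) a b <= Rpower b s / s.
Proof.
  intros Hs Hab.
  assert (Hprim : is_RInt (fun t => Rpower t (s - 1)) a b (Rpower b s / s - Rpower a s / s)).
  { apply (is_RInt_derive (fun t => Rpower t s / s)); intros t Ht;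
      (assert (Ht0 : 0 < t) by (revert Ht; rewrite Rmin_left by lra; lra)).
    - rewrite Rpower_sub_1 by exact Ht0.
      unfold Rpower; auto_derive; [lra | field; lra].
    - apply (@ex_derive_continuous R_AbsRing R_NormedModule).
      unfold Rpower; auto_derive; lra. }
  apply Rle_trans with (RInt (fun t => Rpower t (s - 1)) a b).
  - apply RInt_le; [lra | apply ex_RInt_gamma_integrand; lra | eexists; exact Hprim |].
    intros t Ht; unfold gamma_integrand.
    rewrite <- (Rmult_1_r (Rpower t (s - 1))) at 2.
    apply Rmult_le_compat_l; [apply Rlt_le, exp_pos |].
    rewrite <- exp_0; apply exp_le; lra.
  - rewrite (is_RInt_unique _ _ _ _ Hprim).
    assert (0 < Rpower a s / s) by (apply Rdiv_lt_0_compat; [apply exp_pos | exact Hs]).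
    lra.
Qed.

(* The supremum of [t^K e^(-t/2)] over [t > 0], attained at [t = 2K]. *)
Definition gamma_tail_const (s : R) : R :=
  let K := Rabs s + 1 in exp (K * ln (2 * K) - K).

Lemma gamma_integrand_le_exp s t : 1 <= t ->
  gamma_integrand s t <= gamma_tail_const s * exp (- t / 2).
Proof.
  intros Ht; unfold gamma_integrand, gamma_tail_const, Rpower; rewrite <- !exp_plus.
  apply exp_le; set (K := Rabs s + 1).
  assert (HK : 1 <= K) by (pose proof (Rabs_pos s); unfold K; lra).
  assert (Hln : 0 <= ln t) by (rewrite <- ln_1; apply ln_le; lra).
  assert (Hexp : (s - 1) * ln t <= K * ln t).
  { apply Rmult_le_compat_r; [exact Hln |]; pose proof (Rle_abs s); unfold K; lra. }
  (* [ln u <= u - 1] at [u = t / (2K)] *)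
  assert (Hlog : ln t <= ln (2 * K) + t / (2 * K) - 1).
  { assert (Hu : 0 < t / (2 * K)) by (apply Rdiv_lt_0_compat; lra).
    pose proof (exp_ineq1_le (ln (t / (2 * K)))) as H.
    rewrite exp_ln, ln_div in H by lra; lra. }
  apply Rmult_le_compat_l with (r := K) in Hlog; [| lra].
  replace (K * (ln (2 * K) + t / (2 * K) - 1)) with (K * ln (2 * K) + t / 2 - K) in Hlog
    by (field; lra).
  lra.
Qed.

Lemma gamma_tail_const_pos s : 0 < gamma_tail_const s.
Proof. apply exp_pos. Qed.

Lemma RInt_gamma_integrand_le_exp s a b : 1 <= a <= b ->
  RInt (gamma_integrand s) a b <= 2 * gamma_tail_const s * exp (- a / 2).
Proof.
  intros Hab; set (C := gamma_tail_const s).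
  assert (Hprim : is_RInt (fun t => C * exp (- t / 2)) a b
                    (2 * C * exp (- a / 2) - 2 * C * exp (- b / 2))).
  { replace (2 * C * exp (- a / 2) - 2 * C * exp (- b / 2))
      with (minus (- 2 * C * exp (- b / 2)) (- 2 * C * exp (- a / 2)))
      by (unfold minus, plus, opp; simpl; ring).
    apply (is_RInt_derive (fun t => - 2 * C * exp (- t / 2))); intros t _.
    - auto_derive; [exact I | unfold Rdiv; field].
    - apply (@ex_derive_continuous R_AbsRing R_NormedModule); auto_derive; exact I. }
  apply Rle_trans with (RInt (fun t => C * exp (- t / 2)) a b).
  - apply RInt_le; [lra | apply ex_RInt_gamma_integrand; lra | eexists; exact Hprim |].
    intros t Ht; apply gamma_integrand_le_exp; lra.
  - rewrite (is_RInt_unique _ _ _ _ Hprim).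
    assert (0 < C * exp (- b / 2)) by (apply Rmult_lt_0_compat; apply exp_pos).
    lra.
Qed.

Lemma is_RInt_gen_Gamma s : 0 < s ->
  is_RInt_gen (gamma_integrand s) (at_right 0) (Rbar_locally p_infty) (Gamma s).
Proof.
  intros Hs.
  assert (Hex : ex_RInt_gen (gamma_integrand s) (at_right 0) (Rbar_locally p_infty)).
  { apply ex_RInt_gen_0_p_infty; [apply ex_RInt_gamma_integrand | |].
    - intros eps Heps; exists (Rpower (s * (eps / 2)) (/ s)); split; [apply exp_pos |].
      intros a b Hab Hb.
      rewrite Rabs_pos_eq by (apply RInt_gamma_integrand_ge_0; lra).
      eapply Rle_lt_trans; [apply RInt_gamma_integrand_le_Rpower; lra |].
      apply Rle_lt_trans with (s * (eps / 2) / s).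
      + apply Rmult_le_compat_r; [apply Rlt_le, Rinv_0_lt_compat, Hs |].
        apply Rpower_le_of_le_root; [lra | nra | lra].
      + replace (s * (eps / 2) / s) with (eps / 2) by (field; lra); lra.
    - intros eps Heps; set (C := 2 * gamma_tail_const s).
      assert (HC : 0 < C) by (apply Rmult_lt_0_compat; [lra | apply gamma_tail_const_pos]).
      exists (Rmax 1 (2 * ln (C / (eps / 2)))); intros a b Hab.
      pose proof (Rmax_l 1 (2 * ln (C / (eps / 2)))).
      pose proof (Rmax_r 1 (2 * ln (C / (eps / 2)))).
      rewrite Rabs_pos_eq by (apply RInt_gamma_integrand_ge_0; lra).
      eapply Rle_lt_trans; [apply RInt_gamma_integrand_le_exp; lra |]; fold C.
      apply Rle_lt_trans with (eps / 2); [apply exp_half_le; lra | lra]. }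
  destruct Hex as [l Hl].
  replace (Gamma s) with l; [exact Hl |].
  symmetry; exact (is_RInt_gen_unique _ _ Hl).
Qed.

Lemma Gamma_pos s : 0 < s -> 0 < Gamma s.
Proof.
  intros Hs; apply Rlt_le_trans with (RInt (gamma_integrand s) 1 2).
  { apply RInt_gt_0; [lra | intros; apply gamma_integrand_pos |].
    intros; apply continuous_gamma_integrand; lra. }
  apply (is_RInt_gen_0_p_infty_ge (gamma_integrand s) _ _ 1 2);
    [lra | apply is_RInt_gen_Gamma, Hs |].
  intros a b Ha Hb.
  rewrite <- (RInt_Chasles _ a 1 b), <- (RInt_Chasles _ 1 2 b)
    by (apply ex_RInt_gamma_integrand; lra).
  change plus with Rplus.
  pose proof (RInt_gamma_integrand_ge_0 s a 1); pose proof (RInt_gamma_integrand_ge_0 s 2 b).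
  lra.
Qed.

Lemma is_derive_Rpower_mul_exp s t : 0 < t ->
  is_derive (fun t => Rpower t s * exp (- t)) t
            (s * gamma_integrand s t - gamma_integrand (s + 1) t).
Proof.
  intros Ht; unfold gamma_integrand.
  replace (s + 1 - 1) with s by ring; rewrite Rpower_sub_1 by exact Ht.
  unfold Rpower; auto_derive; [lra | field; lra].
Qed.

Lemma Rpower_mul_exp_at_0 s : 0 < s ->
  filterlim (fun t => Rpower t s * exp (- t)) (at_right 0) (locally 0).
Proof.
  intros Hs; apply filterlim_locally; intros [eps Heps]; simpl.
  exists (mkposreal (Rpower eps (/ s)) (exp_pos _)); intros t Ht Ht0; simpl in Ht.
  apply Rabs_lt_between' in Ht; change (Rabs (Rpower t s * exp (- t) - 0) < eps).
  rewrite Rminus_0_r, Rabs_pos_eq by (apply Rlt_le, Rmult_lt_0_compat; apply exp_pos).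
  apply Rlt_le_trans with (Rpower t s).
  - rewrite <- (Rmult_1_r (Rpower t s)) at 2.
    apply Rmult_lt_compat_l; [apply exp_pos |].
    rewrite <- exp_0; apply exp_increasing; lra.
  - apply Rpower_le_of_le_root; lra.
Qed.

Lemma Rpower_mul_exp_at_p_infty s :
  filterlim (fun t => Rpower t s * exp (- t)) (Rbar_locally p_infty) (locally 0).
Proof.
  apply filterlim_locally; intros [eps Heps]; simpl.
  set (C := gamma_tail_const (s + 1)).
  exists (Rmax 1 (2 * ln (C / (eps / 2)))); intros t Ht.
  pose proof (Rmax_l 1 (2 * ln (C / (eps / 2)))).
  pose proof (Rmax_r 1 (2 * ln (C / (eps / 2)))).
  change (Rabs (Rpower t s * exp (- t) - 0) < eps).
  rewrite Rminus_0_r, Rabs_pos_eq by (apply Rlt_le, Rmult_lt_0_compat; apply exp_pos).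
  pose proof (gamma_integrand_le_exp (s + 1) t) as Hb.
  unfold gamma_integrand in Hb; replace (s + 1 - 1) with s in Hb by ring.
  apply Rle_lt_trans with (C * exp (- t / 2)); [apply Hb; lra |].
  apply Rle_lt_trans with (eps / 2); [apply exp_half_le; try lra | lra].
  apply gamma_tail_const_pos.
Qed.

(* Integration by parts against [t^s e^(-t)], which vanishes at both ends. *)
Lemma Gamma_succ s : 0 < s -> Gamma (s + 1) = s * Gamma s.
Proof.
  intros Hs; set (h := fun t => Rpower t s * exp (- t)).
  assert (Hinside : filter_prod (at_right 0) (Rbar_locally p_infty)
                      (fun ab => forall x, Rmin (fst ab) (snd ab) <= x -> 0 < x)).
  { eapply filter_imp; [| apply (eventually_0_p_infty 1 0); lra].
    intros [a b] [Ha Hb] x; simpl in *; apply Rlt_le_trans, Rmin_case; lra. }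
  assert (HD : is_RInt_gen (Derive h) (at_right 0) (Rbar_locally p_infty) (0 - 0)).
  { apply is_RInt_gen_Derive.
    - eapply filter_imp; [| exact Hinside]; intros ab Hab x [Hx _].
      eexists; apply is_derive_Rpower_mul_exp, Hab, Hx.
    - eapply filter_imp; [| exact Hinside]; intros ab Hab x [Hx _]; specialize (Hab x Hx).
      apply (continuous_ext_loc _ (fun t => s * gamma_integrand s t - gamma_integrand (s + 1) t)).
      + exists (mkposreal x Hab); intros z Hz.
        apply Rabs_lt_between' in Hz; simpl in Hz.
        symmetry; apply is_derive_unique, is_derive_Rpower_mul_exp; lra.
      + apply (@ex_derive_continuous R_AbsRing R_NormedModule).
        unfold gamma_integrand, Rpower; auto_derive; lra.
    - apply Rpower_mul_exp_at_0, Hs.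
    - apply Rpower_mul_exp_at_p_infty. }
  apply is_RInt_gen_ext with
    (g := fun t => s * gamma_integrand s t - gamma_integrand (s + 1) t) in HD.
  2: { eapply filter_imp; [| exact Hinside]; intros ab Hab x [Hx _].
       apply is_derive_unique, is_derive_Rpower_mul_exp, Hab; lra. }
  pose proof (is_RInt_gen_scal _ s _ (is_RInt_gen_Gamma s Hs)) as HsG.
  pose proof (is_RInt_gen_minus _ _ _ _ HsG HD) as Hdiff.
  apply is_RInt_gen_ext with (g := gamma_integrand (s + 1)) in Hdiff.
  2: { apply filter_forall; intros ab x _; unfold minus, plus, opp, scal; simpl.
       unfold mult; simpl; ring. }
  transitivity (minus (scal s (Gamma s)) (0 - 0)); [exact (is_RInt_gen_unique _ _ Hdiff) |].
  unfold minus, plus, opp, scal; simpl; unfold mult; simpl; ring.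
Qed.

(* Cauchy-Schwarz for [t^((s-3/2)/2) e^(-t/2)] and [t^((s-1/2)/2) e^(-t/2)] *)
Lemma Gamma_sqr_le s : 1 / 2 < s -> Gamma s ^ 2 <= Gamma (s - 1 / 2) * Gamma (s + 1 / 2).
Proof.
  intros Hs.
  set (A := Gamma (s - 1 / 2)); set (B := Gamma s); set (C := Gamma (s + 1 / 2)).
  assert (HA : 0 < A) by (apply Gamma_pos; lra).
  set (k := B / A).
  set (g := fun t => exp (- t) *
    (k * Rpower t ((s - 3 / 2) / 2) - Rpower t ((s - 1 / 2) / 2)) ^ 2).
  assert (Hs1 : 0 < s - 1 / 2) by lra; assert (Hs2 : 0 < s) by lra;
    assert (Hs3 : 0 < s + 1 / 2) by lra.
  pose proof (is_RInt_gen_scal _ (k ^ 2) _ (is_RInt_gen_Gamma _ Hs1)) as HA'.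
  pose proof (is_RInt_gen_scal _ (- 2 * k) _ (is_RInt_gen_Gamma _ Hs2)) as HB'.
  pose proof (is_RInt_gen_Gamma _ Hs3) as HC'.
  pose proof (is_RInt_gen_plus _ _ _ _ (is_RInt_gen_plus _ _ _ _ HA' HB') HC') as Hg.
  apply is_RInt_gen_ext with (g := g) in Hg.
  2: { apply filter_forall; intros ab t _.
       unfold plus, scal; simpl; unfold mult; simpl; unfold g, gamma_integrand.
       replace (s - 1 / 2 - 1) with ((s - 3 / 2) / 2 + (s - 3 / 2) / 2) by field.
       replace (s - 1) with ((s - 3 / 2) / 2 + (s - 1 / 2) / 2) by field.
       replace (s + 1 / 2 - 1) with ((s - 1 / 2) / 2 + (s - 1 / 2) / 2) by field.
       rewrite !Rpower_plus; ring. }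
  apply (is_RInt_gen_0_p_infty_ge g _ 0 1 1) in Hg; [| lra |].
  - change (0 <= k ^ 2 * A + - 2 * k * B + C) in Hg.
    assert (Hq : 0 <= C - B ^ 2 / A)
      by (replace (C - B ^ 2 / A) with (k ^ 2 * A + - 2 * k * B + C)
            by (unfold k; field; lra); exact Hg).
    apply Rmult_le_compat_r with (r := A) in Hq; [| lra].
    replace ((C - B ^ 2 / A) * A) with (A * C - B ^ 2) in Hq by (field; lra).
    lra.
  - intros a b Ha Hb; apply RInt_ge_0; [lra | |].
    + apply (@ex_RInt_continuous R_CompleteNormedModule); intros z [Hz _].
      assert (0 < z) by (revert Hz; apply Rmin_case; lra).
      apply (@ex_derive_continuous R_AbsRing R_NormedModule).
      unfold g, Rpower; auto_derive; repeat split; lra.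
    + intros t _; apply Rmult_le_pos; [apply Rlt_le, exp_pos | apply pow2_ge_0].
Qed.

Lemma Gamma_half_step_sqr a : 1 < a ->
  (a - 1) * Gamma (a - 1 / 2) ^ 2 <= Gamma a ^ 2 <= (a - 1 / 2) * Gamma (a - 1 / 2) ^ 2.
Proof.
  intros Ha.
  assert (Hprev : Gamma a = (a - 1) * Gamma (a - 1))
    by (rewrite <- Gamma_succ by lra; f_equal; ring).
  assert (Hnext : Gamma (a + 1 / 2) = (a - 1 / 2) * Gamma (a - 1 / 2))
    by (rewrite <- Gamma_succ by lra; f_equal; field).
  pose proof (Gamma_sqr_le (a - 1 / 2) ltac:(lra)) as Hlo.
  replace (a - 1 / 2 - 1 / 2) with (a - 1) in Hlo by field.
  replace (a - 1 / 2 + 1 / 2) with a in Hlo by field.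
  pose proof (Gamma_sqr_le a ltac:(lra)) as Hhi; rewrite Hnext in Hhi.
  split; [| lra].
  apply Rle_trans with ((a - 1) * (Gamma (a - 1) * Gamma a)).
  - apply Rmult_le_compat_l; lra.
  - right; replace (Gamma a ^ 2) with (Gamma a * Gamma a) by ring; rewrite Hprev at 2; ring.
Qed.

Lemma Gamma_sub_nat a m : 0 < a - INR m ->
  Gamma a = Gamma (a - INR m) * prodR (fun i => a - INR i) m.
Proof.
  induction m as [| m IH]; intros Ham; cbn [prodR].
  - rewrite Rminus_0_r; ring.
  - rewrite S_INR in *; rewrite IH by lra.
    replace (a - INR m) with (a - (INR m + 1) + 1) at 1 by ring.
    rewrite Gamma_succ by lra; ring.
Qed.

(** * Finite sums *)

Fixpoint sumR (f : nat -> R) (k : nat) : R :=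
  match k with
  | O => 0
  | S k => sumR f k + f (S k)
  end.

Lemma sumR_ext f g k : (forall i, (1 <= i <= k)%nat -> f i = g i) -> sumR f k = sumR g k.
Proof.
  induction k as [| k IH]; intros H; simpl; [reflexivity |].
  f_equal; [apply IH; intros; apply H | apply H]; lia.
Qed.

Lemma sumR_plus f g k : sumR (fun i => f i + g i) k = sumR f k + sumR g k.
Proof. induction k as [| k IH]; simpl; [ring | rewrite IH; ring]. Qed.

Lemma sumR_const c k : sumR (fun _ => c) k = INR k * c.
Proof. induction k as [| k IH]; simpl sumR; [simpl; ring | rewrite IH, S_INR; ring]. Qed.

Lemma Rabs_sumR_le f g k : (forall i, (1 <= i <= k)%nat -> Rabs (f i) <= g i) ->
  Rabs (sumR f k) <= sumR g k.
Proof.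
  induction k as [| k IH]; intros H; simpl; [rewrite Rabs_R0; lra |].
  eapply Rle_trans; [apply Rabs_triang |].
  apply Rplus_le_compat; [apply IH; intros; apply H | apply H]; lia.
Qed.

Lemma prodR_pos f k : (forall i, (1 <= i <= k)%nat -> 0 < f i) -> 0 < prodR f k.
Proof.
  induction k as [| k IH]; intros H; simpl; [lra |].
  apply Rmult_lt_0_compat; [apply IH; intros; apply H | apply H]; lia.
Qed.

Lemma ln_prodR f k : (forall i, (1 <= i <= k)%nat -> 0 < f i) ->
  ln (prodR f k) = sumR (fun i => ln (f i)) k.
Proof.
  induction k as [| k IH]; intros H; simpl; [apply ln_1 |].
  rewrite ln_mult, IH; [reflexivity | | apply prodR_pos | apply H]; intros; try apply H; lia.
Qed.

(** * Logarithms of Gamma ratios *)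

Lemma ln_gamma_ratio_nat n c m : 0 < n -> 0 < (n - c) / 2 - INR m ->
  INR m * ln (2 / n) + ln (Gamma ((n - c) / 2) / Gamma ((n - c) / 2 - INR m))
  = sumR (fun i => ln (1 - (c + 2 * INR i) / n)) m.
Proof.
  intros Hn Hm; set (a := (n - c) / 2) in *.
  assert (Hfac : forall i, (1 <= i <= m)%nat -> 0 < a - INR i)
    by (intros i Hi; pose proof (le_INR i m ltac:(lia)); lra).
  assert (HG : 0 < Gamma (a - INR m)) by (apply Gamma_pos, Hm).
  rewrite (Gamma_sub_nat a m Hm).
  replace (Gamma (a - INR m) * prodR (fun i => a - INR i) m / Gamma (a - INR m))
    with (prodR (fun i => a - INR i) m) by (field; lra).
  rewrite ln_prodR by exact Hfac.
  rewrite <- sumR_const, <- sumR_plus; apply sumR_ext; intros i Hi.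
  rewrite <- ln_mult; [| apply Rdiv_lt_0_compat; lra | apply Hfac, Hi].
  f_equal; unfold a; field; lra.
Qed.

Lemma ln_gamma_ratio_half_bounds n c : 0 < n -> c + 2 < n ->
  ln (1 - (c + 2) / n) / 2
  <= ln (2 / n) / 2 + ln (Gamma ((n - c) / 2) / Gamma ((n - c) / 2 - 1 / 2))
  <= ln (1 - (c + 1) / n) / 2.
Proof.
  intros Hn Hc; set (a := (n - c) / 2).
  assert (Ha : 1 < a) by (unfold a; lra).
  assert (HG : 0 < Gamma a) by (apply Gamma_pos; lra).
  assert (HG' : 0 < Gamma (a - 1 / 2)) by (apply Gamma_pos; lra).
  destruct (Gamma_half_step_sqr a Ha) as [Hlo Hhi].
  apply ln_le in Hlo; [| apply Rmult_lt_0_compat; [lra | apply pow_lt, HG']].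
  apply ln_le in Hhi; [| apply pow_lt, HG].
  rewrite ln_mult, !ln_pow in Hlo, Hhi by (try apply pow_lt; lra); simpl INR in Hlo, Hhi.
  rewrite (ln_div (Gamma a)) by lra.
  replace (ln (1 - (c + 2) / n)) with (ln (2 / n) + ln (a - 1)).
  2: { rewrite <- ln_mult by (try apply Rdiv_lt_0_compat; lra); f_equal; unfold a; field; lra. }
  replace (ln (1 - (c + 1) / n)) with (ln (2 / n) + ln (a - 1 / 2)).
  2: { rewrite <- ln_mult by (try apply Rdiv_lt_0_compat; lra); f_equal; unfold a; field; lra. }
  lra.
Qed.

Lemma ln_gamma_ratio_half_approx n c : 0 < n -> 0 <= c -> (c + 2) / n <= 1 / 2 ->
  Rabs (ln (2 / n) / 2 + ln (Gamma ((n - c) / 2) / Gamma ((n - c) / 2 - 1 / 2))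
        + (c + 1) / (2 * n))
  <= 1 / (2 * n) + ((c + 2) / n) ^ 2 / 2.
Proof.
  intros Hn Hc Htau.
  pose proof (le_div2_of_ratio _ _ Hn Htau).
  destruct (ln_gamma_ratio_half_bounds n c Hn ltac:(lra)) as [Hlo Hhi].
  set (s := (c + 1) / n) in *; set (s' := (c + 2) / n) in *.
  assert (Hss' : s' = s + 1 / n) by (unfold s, s'; field; lra).
  assert (Hs : 0 <= s) by (apply Rdiv_le_0_compat; lra).
  assert (Hinv : 0 < 1 / n) by (apply Rdiv_lt_0_compat; lra).
  destruct (ln_one_sub_bounds s ltac:(lra)) as [_ Hs_hi].
  destruct (ln_one_sub_bounds s' ltac:(lra)) as [Hs'_lo _].
  assert (Hcube : s' ^ 3 <= s' ^ 2 / 2) by nra.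
  replace ((c + 1) / (2 * n)) with (s / 2) by (unfold s; field; lra).
  replace (1 / (2 * n)) with ((1 / n) / 2) by (field; lra).
  apply Rabs_le; nra.
Qed.

Lemma sumR_ln_one_sub_approx (t : nat -> R) tau m : tau <= 1 / 2 ->
  (forall i, (1 <= i <= m)%nat -> 0 <= t i <= tau) ->
  Rabs (sumR (fun i => ln (1 - t i)) m + sumR (fun i => t i + t i ^ 2 / 2) m)
  <= INR m * tau ^ 3.
Proof.
  intros Htau Ht; rewrite <- sumR_plus, <- sumR_const; apply Rabs_sumR_le.
  intros i Hi; destruct (Ht i Hi) as [Hti0 Hti].
  destruct (ln_one_sub_bounds (t i) ltac:(lra)) as [Hlo Hhi].
  assert (t i ^ 3 <= tau ^ 3) by (apply pow_incr; lra).
  apply Rabs_le; lra.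
Qed.

(* [e] is the parity of [p = 2 m + e]; its term is the first-order part of the extra half step
   [Gamma b / Gamma (b - 1/2)] when [p] is odd. *)
Definition taylor_row (n c : R) (m e : nat) : R :=
  INR m * (c + INR m + 1) / n
  + (INR m * c ^ 2 + 2 * c * INR m * (INR m + 1)
     + 2 * INR m * (INR m + 1) * (2 * INR m + 1) / 3) / (2 * n ^ 2)
  + INR e * (c + 2 * INR m + 1) / (2 * n).

Lemma sumR_taylor_row n c m : n <> 0 ->
  sumR (fun i => (c + 2 * INR i) / n + ((c + 2 * INR i) / n) ^ 2 / 2) m
  = taylor_row n c m 0.
Proof.
  intros Hn; unfold taylor_row; induction m as [| m IH]; cbn [sumR].
  - simpl; field; exact Hn.
  - rewrite IH, S_INR; simpl INR; field; exact Hn.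
Qed.

Lemma ln_gamma_ratio_nat_approx n c m : 0 < n -> 0 <= c ->
  (c + 2 * INR m + 2) / n <= 1 / 2 ->
  Rabs (INR m * ln (2 / n) + ln (Gamma ((n - c) / 2) / Gamma ((n - c) / 2 - INR m))
        + taylor_row n c m 0)
  <= INR m * ((c + 2 * INR m + 2) / n) ^ 3.
Proof.
  intros Hn Hc Htau; pose proof (le_div2_of_ratio _ _ Hn Htau); pose proof (pos_INR m).
  rewrite ln_gamma_ratio_nat, <- sumR_taylor_row by lra.
  apply sumR_ln_one_sub_approx; [exact Htau |].
  intros i Hi; pose proof (le_INR i m ltac:(lia)); pose proof (pos_INR i).
  split; [apply Rdiv_le_0_compat; lra |].
  apply Rmult_le_compat_r; [apply Rlt_le, Rinv_0_lt_compat |]; lra.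
Qed.

Lemma ln_gamma_ratio_approx n c m e : 0 < n -> 0 <= c -> (e <= 1)%nat ->
  (c + 2 * INR m + 2) / n <= 1 / 2 ->
  Rabs ((INR m + INR e / 2) * ln (2 / n)
        + ln (Gamma ((n - c) / 2) / Gamma ((n - c) / 2 - INR m - INR e / 2))
        + taylor_row n c m e)
  <= INR m * ((c + 2 * INR m + 2) / n) ^ 3 + 1 / (2 * n)
     + ((c + 2 * INR m + 2) / n) ^ 2 / 2.
Proof.
  intros Hn Hc He Htau; pose proof (le_div2_of_ratio _ _ Hn Htau); pose proof (pos_INR m).
  pose proof (ln_gamma_ratio_nat_approx n c m Hn Hc Htau) as Hnat.
  set (tau := (c + 2 * INR m + 2) / n) in *.
  assert (Hrest : 0 <= 1 / (2 * n) + tau ^ 2 / 2)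
    by (assert (0 < 1 / (2 * n)) by (apply Rdiv_lt_0_compat; lra); nra).
  destruct e as [| [| e]]; [| | lia]; simpl INR.
  - replace (INR m + 0 / 2) with (INR m) by field.
    replace ((n - c) / 2 - INR m - 0 / 2) with ((n - c) / 2 - INR m) by field.
    lra.
  - set (a := (n - c) / 2) in *.
    pose proof (ln_gamma_ratio_half_approx n (c + 2 * INR m) Hn ltac:(lra) Htau) as Hhalf.
    replace ((n - (c + 2 * INR m)) / 2) with (a - INR m) in Hhalf by (unfold a; field).
    fold tau in Hhalf.
    assert (HG1 : 0 < Gamma a) by (apply Gamma_pos; unfold a; lra).
    assert (HG2 : 0 < Gamma (a - INR m)) by (apply Gamma_pos; unfold a; lra).
    assert (HG3 : 0 < Gamma (a - INR m - 1 / 2)) by (apply Gamma_pos; unfold a; lra).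
    match goal with |- Rabs ?E <= _ => replace E with
      ((INR m * ln (2 / n) + ln (Gamma a / Gamma (a - INR m)) + taylor_row n c m 0)
       + (ln (2 / n) / 2 + ln (Gamma (a - INR m) / Gamma (a - INR m - 1 / 2))
          + (c + 2 * INR m + 1) / (2 * n))) end.
    + eapply Rle_trans; [apply Rabs_triang | lra].
    + replace (Gamma a / Gamma (a - INR m - 1 / 2))
        with (Gamma a / Gamma (a - INR m) * (Gamma (a - INR m) / Gamma (a - INR m - 1 / 2)))
        by (field; lra).
      rewrite ln_mult by (apply Rdiv_lt_0_compat; assumption).
      unfold taylor_row; simpl INR; field; lra.
Qed.

(* Homogenization in [c] of [sum_(j <= q) sum_(i <= m) (j - 1 + 2 i)^2], which is its value at
   [c = 1]. *)
Definition grid_sq_sum (q m c : R) : R :=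
  m * (q - c) * q * (2 * q - c) / 6 + m * (m + c) * q * (q - c)
  + 2 * q * m * (m + c) * (2 * m + c) / 3.

Lemma sumR_taylor_row_grid n m e q : n <> 0 -> (e <= 1)%nat ->
  sumR (fun j => taylor_row n (INR j - 1) m e) q
  = ((2 * INR m + INR e) ^ 2 * INR q + (2 * INR m + INR e) * INR q ^ 2) / (4 * n)
    + INR q * INR m / (2 * n) + grid_sq_sum (INR q) (INR m) 1 / (2 * n ^ 2).
Proof.
  intros Hn He; unfold taylor_row, grid_sq_sum.
  destruct e as [| [| e]]; [| | lia]; simpl INR;
    (induction q as [| q IH]; cbn [sumR]; [simpl; field; exact Hn |]);
    rewrite IH, S_INR; field; exact Hn.
Qed.

Definition gamma_product (n : R) (p q : nat) : R :=
  Rpower (2 / n) (INR (p * q) / 2) *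
  prodR (fun j => Gamma ((n - INR j + 1) / 2) / Gamma ((n - INR p - INR j + 1) / 2)) q.

Lemma ln_gamma_product n p q : 0 < n -> INR p + INR q < n ->
  0 < gamma_product n p q /\
  ln (gamma_product n p q)
  = sumR (fun j => INR p / 2 * ln (2 / n)
                   + ln (Gamma ((n - INR j + 1) / 2) / Gamma ((n - INR p - INR j + 1) / 2))) q.
Proof.
  intros Hn Hpq.
  assert (Hfac : forall j, (1 <= j <= q)%nat ->
    0 < Gamma ((n - INR j + 1) / 2) / Gamma ((n - INR p - INR j + 1) / 2)).
  { intros j Hj; pose proof (le_INR j q ltac:(lia)); pose proof (pos_INR p).
    apply Rdiv_lt_0_compat; apply Gamma_pos; lra. }
  assert (Hprod := prodR_pos _ _ Hfac).
  unfold gamma_product; split; [apply Rmult_lt_0_compat; [apply exp_pos | exact Hprod] |].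
  rewrite ln_mult, ln_Rpower, ln_prodR, sumR_plus, sumR_const, mult_INR
    by (try apply exp_pos; assumption).
  field.
Qed.

Lemma ln_gamma_product_approx n p q : 0 < n -> (INR p + INR q + 1) / n <= 1 / 2 ->
  Rabs (ln (gamma_product n p q) + (INR p ^ 2 * INR q + INR p * INR q ^ 2) / (4 * n)
        + INR q * INR (p / 2) / (2 * n) + grid_sq_sum (INR q) (INR (p / 2)) 1 / (2 * n ^ 2))
  <= INR q * (INR (p / 2) * ((INR p + INR q + 1) / n) ^ 3 + 1 / (2 * n)
              + ((INR p + INR q + 1) / n) ^ 2 / 2).
Proof.
  intros Hn Htau.
  pose proof (le_div2_of_ratio _ _ Hn Htau).
  destruct (ln_gamma_product n p q Hn ltac:(lra)) as [_ ->].
  set (m := (p / 2)%nat); set (e := (p mod 2)%nat).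
  assert (He : (e <= 1)%nat) by (pose proof (Nat.mod_upper_bound p 2); unfold e; lia).
  assert (Hp : INR p = 2 * INR m + INR e) by apply INR_div_mod_2.
  set (tau := (INR p + INR q + 1) / n) in *.
  assert (Hgrid := sumR_taylor_row_grid n m e q ltac:(lra) He); rewrite <- Hp in Hgrid.
  match goal with |- Rabs (?S + ?A + ?B + ?C) <= _ =>
    replace (S + A + B + C) with (S + sumR (fun j => taylor_row n (INR j - 1) m e) q)
      by (rewrite Hgrid; ring) end.
  rewrite <- sumR_plus, <- sumR_const; apply Rabs_sumR_le; intros j Hj.
  assert (1 <= INR j) by (apply (le_INR 1); lia); pose proof (le_INR j q ltac:(lia)).
  pose proof (pos_INR m); pose proof (pos_INR e).
  set (tau_j := (INR j - 1 + 2 * INR m + 2) / n).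
  assert (Htau_j : 0 <= tau_j <= tau).
  { unfold tau_j, tau; split; [apply Rdiv_le_0_compat; lra |].
    apply Rmult_le_compat_r; [apply Rlt_le, Rinv_0_lt_compat |]; lra. }
  eapply Rle_trans.
  - replace (INR p / 2) with (INR m + INR e / 2) by lra.
    replace ((n - INR j + 1) / 2) with ((n - (INR j - 1)) / 2) by field.
    replace ((n - INR p - INR j + 1) / 2) with ((n - (INR j - 1)) / 2 - INR m - INR e / 2)
      by lra.
    apply ln_gamma_ratio_approx; [exact Hn | lra | exact He | fold tau_j; lra].
  - fold tau_j.
    assert (tau_j ^ 3 <= tau ^ 3) by (apply pow_incr; lra).
    assert (tau_j ^ 2 <= tau ^ 2) by (apply pow_incr; lra).
    assert (INR m * tau_j ^ 3 <= INR m * tau ^ 3) by (apply Rmult_le_compat_l; lra).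
    lra.
Qed.

(** * Asymptotics *)

Lemma nfloor_bounds r : 0 <= r -> r - 1 < INR (Defs.nfloor r) <= r.
Proof.
  intros Hr; unfold Defs.nfloor; destruct (base_Int_part r) as [Hlo Hhi].
  assert (Hz : (-1 < Int_part r)%Z) by (apply lt_IZR; lra).
  rewrite INR_IZR_INZ, Z2Nat.id by lia; lra.
Qed.

Lemma p_n_dev x n : 0 <= x -> Rabs (INR (p_n x n) - x * sqrt (INR n)) <= 1.
Proof.
  intros Hx; destruct (nfloor_bounds (x * sqrt (INR n))) as [Hlo Hhi];
    [apply Rmult_le_pos; [exact Hx | apply sqrt_pos] |].
  apply Rabs_le; unfold p_n; lra.
Qed.

Lemma half_p_n_dev x n : 0 <= x -> Rabs (INR (p_n x n / 2) - x / 2 * sqrt (INR n)) <= 1.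
Proof.
  intros Hx; set (p := p_n x n).
  pose proof (INR_div_mod_2 p) as Hp.
  assert (He : INR (p mod 2) <= 1)
    by (apply (le_INR _ 1); pose proof (Nat.mod_upper_bound p 2); lia).
  pose proof (pos_INR (p mod 2)).
  pose proof (proj1 (Rabs_le_between _ _) (p_n_dev x n Hx)) as Hdev; fold p in Hdev.
  apply Rabs_le; lra.
Qed.

Definition scaled (a : nat -> R) (n : nat) : R := a n / sqrt (INR n).

Lemma is_lim_seq_inv_sqrt : is_lim_seq (fun n => / sqrt (INR n)) 0.
Proof.
  apply is_lim_seq_ext with (fun n => sqrt (/ INR n)); [intros n; apply sqrt_inv |].
  rewrite <- sqrt_0; apply is_lim_seq_continuous; [apply continuity_pt_sqrt; lra |].
  apply (is_lim_seq_inv _ p_infty); [apply is_lim_seq_INR | discriminate].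
Qed.

Lemma is_lim_seq_scaled (a : nat -> R) c C :
  (forall n, Rabs (a n - c * sqrt (INR n)) <= C) -> is_lim_seq (scaled a) c.
Proof.
  intros Hdev.
  apply (is_lim_seq_le_le_loc (fun n => c - C * / sqrt (INR n)) _
                              (fun n => c + C * / sqrt (INR n))).
  - exists 1%nat; intros n Hn; unfold scaled.
    assert (Hs : 0 < sqrt (INR n)) by (apply sqrt_lt_R0, lt_0_INR; lia).
    assert (Hsplit : a n / sqrt (INR n) = c + (a n - c * sqrt (INR n)) * / sqrt (INR n))
      by (field; lra).
    pose proof (proj1 (Rabs_le_between _ _) (Hdev n)) as Hb.
    pose proof (Rinv_0_lt_compat _ Hs).
    rewrite Hsplit; split; nra.
  - replace (Finite c) with (Finite (c - C * 0)) by (f_equal; ring).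
    apply is_lim_seq_minus'; [apply is_lim_seq_const |].
    apply is_lim_seq_mult'; [apply is_lim_seq_const | apply is_lim_seq_inv_sqrt].
  - replace (Finite c) with (Finite (c + C * 0)) by (f_equal; ring).
    apply is_lim_seq_plus'; [apply is_lim_seq_const |].
    apply is_lim_seq_mult'; [apply is_lim_seq_const | apply is_lim_seq_inv_sqrt].
Qed.

Lemma is_lim_seq_eq_lim (u : nat -> R) (l l' : R) : is_lim_seq u l -> l = l' -> is_lim_seq u l'.
Proof. intros Hu <-; exact Hu. Qed.

Ltac is_lim_seq_poly :=
  lazymatch goal with
  | |- is_lim_seq (fun _ => ?c) _ => apply is_lim_seq_const
  | |- is_lim_seq (fun n => @?a n + @?b n) _ =>
      eapply (is_lim_seq_plus' a b); [is_lim_seq_poly | is_lim_seq_poly]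
  | |- is_lim_seq (fun n => @?a n - @?b n) _ =>
      eapply (is_lim_seq_minus' a b); [is_lim_seq_poly | is_lim_seq_poly]
  | |- is_lim_seq (fun n => @?a n * @?b n) _ =>
      eapply (is_lim_seq_mult' a b); [is_lim_seq_poly | is_lim_seq_poly]
  | |- is_lim_seq (fun n => @?a n / ?c) _ =>
      eapply (is_lim_seq_mult' a (fun _ => / c)); [is_lim_seq_poly | apply is_lim_seq_const]
  | |- is_lim_seq (fun n => @?a n ^ ?k) _ =>
      eapply (is_lim_seq_continuous (fun t => t ^ k) a);
        [apply derivable_continuous_pt, derivable_pt_pow | is_lim_seq_poly]
  | |- _ => eassumption
  end.

Lemma is_lim_seq_of_close (a b e : nat -> R) (l : R) :
  eventually (fun n => Rabs (a n - b n) <= e n) ->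
  is_lim_seq b l -> is_lim_seq e 0 -> is_lim_seq a l.
Proof.
  intros Hclose Hb He.
  apply (is_lim_seq_le_le_loc (fun n => b n - e n) _ (fun n => b n + e n)).
  - revert Hclose; apply filter_imp; intros n Hn.
    apply Rabs_le_between in Hn; lra.
  - apply (is_lim_seq_eq_lim _ (l - 0)); [apply is_lim_seq_minus'; assumption | ring].
  - apply (is_lim_seq_eq_lim _ (l + 0)); [apply is_lim_seq_plus'; assumption | ring].
Qed.

Lemma sqrt_INR_scaling n : (0 < n)%nat ->
  exists r, 0 < r /\ sqrt (INR n) = r /\ INR n = r * r.
Proof.
  intros Hn; exists (sqrt (INR n)); split; [apply sqrt_lt_R0, lt_0_INR, Hn |].
  split; [reflexivity | symmetry; apply sqrt_sqrt, pos_INR].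
Qed.

Section Asymptotics.

Variables x y : R.
Hypotheses (hx : 0 <= x) (hy : 0 <= y).

Let u := scaled (fun n => INR (p_n x n)).
Let v := scaled (fun n => INR (p_n y n)).
Let w := scaled (fun n => INR (p_n x n / 2)).
Let eps := fun n => / sqrt (INR n).

Let Hu : is_lim_seq u x.
Proof. apply (is_lim_seq_scaled _ _ 1); intros n; apply p_n_dev, hx. Qed.
Let Hv : is_lim_seq v y.
Proof. apply (is_lim_seq_scaled _ _ 1); intros n; apply p_n_dev, hy. Qed.
Let Hw : is_lim_seq w (x / 2).
Proof. apply (is_lim_seq_scaled _ _ 1); intros n; apply half_p_n_dev, hx. Qed.
Let Heps : is_lim_seq eps 0.
Proof. exact is_lim_seq_inv_sqrt. Qed.

Lemma eventually_ratio_small :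
  eventually (fun n => 0 < INR n /\ (INR (p_n x n) + INR (p_n y n) + 1) / INR n <= 1 / 2).
Proof.
  assert (Htau : is_lim_seq (fun n => (u n + v n + eps n) * eps n) 0)
    by (apply (is_lim_seq_eq_lim _ ((x + y + 0) * 0)); [is_lim_seq_poly | ring]).
  apply is_lim_seq_spec in Htau; destruct (Htau (mkposreal (1 / 2) ltac:(lra))) as [N HN].
  exists (S N); intros n Hn; specialize (HN n ltac:(lia)); simpl in HN.
  destruct (sqrt_INR_scaling n ltac:(lia)) as [r [Hr [Hsqrt Hsq]]].
  unfold u, v, eps, scaled in HN; rewrite Hsqrt in HN; rewrite Hsq.
  split; [nra |].
  replace ((INR (p_n x n) + INR (p_n y n) + 1) / (r * r))
    with ((INR (p_n x n) / r + INR (p_n y n) / r + / r) * / r) by (field; lra).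
  rewrite Rminus_0_r in HN; eapply Rle_trans; [apply Rle_abs | lra].
Qed.

Lemma ln_K_n_asymptotics :
  is_lim_seq (fun n => ln (K_n x y n)
    + ((INR (p_n x n) ^ 2 * INR (p_n y n) + INR (p_n x n) * INR (p_n y n) ^ 2) / (4 * INR n)
       + x * y / 4 + (2 * x ^ 3 * y + 2 * x * y ^ 3 + 3 * x ^ 2 * y ^ 2) / 24)) 0.
Proof.
  (* [q m / (2 n)] and [grid_sq_sum q m 1 / (2 n^2)] are homogeneous of degree 0 in
     [(q, m, 1, sqrt n)]. *)
  apply (is_lim_seq_of_close _
    (fun n => (x * y / 4 - v n * w n / 2)
              + ((2 * x ^ 3 * y + 2 * x * y ^ 3 + 3 * x ^ 2 * y ^ 2) / 24
                 - grid_sq_sum (v n) (w n) (eps n) / 2))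
    (fun n => v n * eps n * (w n * (u n + v n + eps n) ^ 3 + 1 / 2
                             + (u n + v n + eps n) ^ 2 / 2))).
  - eapply filter_imp; [| exact eventually_ratio_small]; intros n [Hn Htau].
    pose proof (ln_gamma_product_approx (INR n) (p_n x n) (p_n y n) Hn Htau) as Happrox.
    change (gamma_product (INR n) (p_n x n) (p_n y n)) with (K_n x y n) in Happrox.
    destruct (sqrt_INR_scaling n ltac:(apply INR_lt; simpl; lra)) as [r [Hr [Hsqrt Hsq]]].
    unfold u, v, w, eps, scaled; rewrite Hsqrt; rewrite Hsq in Happrox |- *.
    set (P := INR (p_n x n)) in *; set (Q := INR (p_n y n)) in *;
      set (M := INR (p_n x n / 2)) in *.
    match goal with |- Rabs ?E <= ?B => replace E with
      (ln (K_n x y n) + (P ^ 2 * Q + P * Q ^ 2) / (4 * (r * r)) + Q * M / (2 * (r * r))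
       + grid_sq_sum Q M 1 / (2 * (r * r) ^ 2)) by (unfold grid_sq_sum; field; lra);
      replace B with (Q * (M * ((P + Q + 1) / (r * r)) ^ 3 + 1 / (2 * (r * r))
                           + ((P + Q + 1) / (r * r)) ^ 2 / 2)) by (field; lra) end.
    exact Happrox.
  - apply (is_lim_seq_eq_lim _ ((x * y / 4 - y * (x / 2) / 2)
      + ((2 * x ^ 3 * y + 2 * x * y ^ 3 + 3 * x ^ 2 * y ^ 2) / 24
         - grid_sq_sum y (x / 2) 0 / 2))); unfold grid_sq_sum; [is_lim_seq_poly | field].
  - apply (is_lim_seq_eq_lim _ (y * 0 * ((x / 2) * (x + y + 0) ^ 3 + 1 / 2
                                          + (x + y + 0) ^ 2 / 2))); [is_lim_seq_poly | ring].
Qed.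

End Asymptotics.

Theorem lemma2p6 (x y : R) (hx : 0 < x) (hy : 0 < y) :
  exists o : nat -> R,
    is_lim_seq o 0 /\
    exists N : nat, forall n : nat, (N <= n)%nat ->
      let p := INR (p_n x n) in
      let q := INR (p_n y n) in
      K_n x y n =
      exp (- ((p ^ 2 * q + p * q ^ 2) / (4 * INR n) + x * y / 4
              + (2 * x ^ 3 * y + 2 * x * y ^ 3 + 3 * x ^ 2 * y ^ 2) / 24)
           + o n).
Proof.
  assert (hx' : 0 <= x) by lra; assert (hy' : 0 <= y) by lra.
  eexists; split; [exact (ln_K_n_asymptotics x y hx' hy') |].
  destruct (eventually_ratio_small x y hx' hy') as [N HN].
  exists N; intros n Hn p q; destruct (HN n Hn) as [Hn0 Htau].
  assert (HK : 0 < K_n x y n)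
    by (pose proof (le_div2_of_ratio _ _ Hn0 Htau);
        apply (ln_gamma_product (INR n)); lra).
  rewrite <- (exp_ln (K_n x y n)) at 1 by exact HK; f_equal; unfold p, q; ring.
Qed.
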